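(* On the open subset of $\mathbb{R}^4$ with coordinates $(u_1,u_2,p_{u_1},p_{u_2})$ where $u_1\neq u_2$, equipped with the canonical Poisson bracket $\{u_1,u_2\}=\{p_{u_1},p_{u_2}\}=0$, $\{u_i,p_{u_j}\}=\delta_{ij}$, define $$a=\frac{p_{u_1}^2}{u_1-u_2}+\frac{p_{u_2}^2}{u_2-u_1}-u_1^2-u_1u_2-u_2^2,\qquad b=\frac{u_2p_{u_1}^2}{u_2-u_1}+\frac{u_1p_{u_2}^2}{u_1-u_2}+(u_1+u_2)u_1u_2,$$ (so that $p_{u_i}^2=u_i^3+au_i+b$ for $i=1,2$), and, with $\beta=\dfrac{p_{u_1}-p_{u_2}}{u_1-u_2}$, $$x_3=\beta^2-u_1-u_2,\qquad y_3=p_{u_1}+\beta\,(x_3-u_1).$$ Then these four functions satisfy $$\{a,b\}=0,\quad \{a,x_3\}=0,\quad \{a,y_3\}=0,\quad \{b,x_3\}=2y_3,\quad \{b,y_3\}=3x_3^2+a,\quad \{x_3,y_3\}=-1,$$ together with the relation $y_3^2=x_3^3+ax_3+b$. In particular, the Hamiltonian system with Hamiltonian $H=a$ is superintegrable, with first integrals $a,b,x_3,y_3$.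
   Context: The Poisson bracket is $\{f,g\}=\sum_{i=1}^2\left(\frac{\partial f}{\partial u_i}\frac{\partial g}{\partial p_{u_i}}-\frac{\partial f}{\partial p_{u_i}}\frac{\partial g}{\partial u_i}\right)$. Geometrically, $(x_3,y_3)$ is the third intersection point of the cubic $y^2=x^3+ax+b$ with the line through $(u_1,p_{u_1})$ and $(u_2,p_{u_2})$. *)

From Stdlib Require Import Reals ClassicalEpsilon.
Open Scope R_scope.

(* A function on R^4 with coordinates (u1, u2, p1, p2) = (u_1, u_2, p_{u_1}, p_{u_2}). *)
Definition fun4 := R -> R -> R -> R -> R.

(* The derivative of g at x (the unique l with derivable_pt_lim g x l, chosen
   by classical choice; it is only meaningful where g is differentiable). *)
Definition deriv (g : R -> R) (x : R) : R :=
  epsilon (inhabits 0) (fun l => derivable_pt_lim g x l).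

Definition d_u1 (f : fun4) : fun4 := fun u1 u2 p1 p2 => deriv (fun t => f t u2 p1 p2) u1.
Definition d_u2 (f : fun4) : fun4 := fun u1 u2 p1 p2 => deriv (fun t => f u1 t p1 p2) u2.
Definition d_p1 (f : fun4) : fun4 := fun u1 u2 p1 p2 => deriv (fun t => f u1 u2 t p2) p1.
Definition d_p2 (f : fun4) : fun4 := fun u1 u2 p1 p2 => deriv (fun t => f u1 u2 p1 t) p2.

Definition PB (f g : fun4) : fun4 := fun u1 u2 p1 p2 =>
  d_u1 f u1 u2 p1 p2 * d_p1 g u1 u2 p1 p2 - d_p1 f u1 u2 p1 p2 * d_u1 g u1 u2 p1 p2
  + (d_u2 f u1 u2 p1 p2 * d_p2 g u1 u2 p1 p2 - d_p2 f u1 u2 p1 p2 * d_u2 g u1 u2 p1 p2).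

Definition fa : fun4 := fun u1 u2 p1 p2 =>
  p1 ^ 2 / (u1 - u2) + p2 ^ 2 / (u2 - u1) - u1 ^ 2 - u1 * u2 - u2 ^ 2.

Definition fb : fun4 := fun u1 u2 p1 p2 =>
  u2 * p1 ^ 2 / (u2 - u1) + u1 * p2 ^ 2 / (u1 - u2) + (u1 + u2) * u1 * u2.

Definition beta : fun4 := fun u1 u2 p1 p2 => (p1 - p2) / (u1 - u2).

Definition x3 : fun4 := fun u1 u2 p1 p2 => (beta u1 u2 p1 p2) ^ 2 - u1 - u2.

Definition y3 : fun4 := fun u1 u2 p1 p2 =>
  p1 + beta u1 u2 p1 p2 * (x3 u1 u2 p1 p2 - u1).

(* All four functions are rational in (u1, u2, p1, p2) and smooth off the
   diagonal u1 = u2, where their gradients have closed forms. The bracket at a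
   point depends only on the two gradients there, so each bracket, like the
   cubic relation, reduces to an identity between rational functions. *)
From Stdlib Require Import Reals Lra ClassicalEpsilon.
From Coquelicot Require Import Coquelicot.
Open Scope R_scope.

Lemma deriv_eq (g : R -> R) (x l : R) : derivable_pt_lim g x l -> deriv g x = l.
Proof.
  intro Hg; unfold deriv.
  apply (uniqueness_limite g x); [|exact Hg].
  exact (epsilon_spec (inhabits 0) (fun l => derivable_pt_lim g x l) (ex_intro _ l Hg)).
Qed.

Definition has_gradient (f : fun4) (u1 u2 p1 p2 : R) (fu1 fu2 fp1 fp2 : R) : Prop :=
  derivable_pt_lim (fun t => f t u2 p1 p2) u1 fu1 /\
  derivable_pt_lim (fun t => f u1 t p1 p2) u2 fu2 /\
  derivable_pt_lim (fun t => f u1 u2 t p2) p1 fp1 /\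
  derivable_pt_lim (fun t => f u1 u2 p1 t) p2 fp2.

Lemma PB_gradient {f g : fun4} {u1 u2 p1 p2 fu1 fu2 fp1 fp2 gu1 gu2 gp1 gp2 : R} :
  has_gradient f u1 u2 p1 p2 fu1 fu2 fp1 fp2 ->
  has_gradient g u1 u2 p1 p2 gu1 gu2 gp1 gp2 ->
  PB f g u1 u2 p1 p2 = fu1 * gp1 - fp1 * gu1 + (fu2 * gp2 - fp2 * gu2).
Proof.
  intros (Hfu1 & Hfu2 & Hfp1 & Hfp2) (Hgu1 & Hgu2 & Hgp1 & Hgp2).
  unfold PB, d_u1, d_u2, d_p1, d_p2.
  now rewrite (deriv_eq _ _ _ Hfu1), (deriv_eq _ _ _ Hfu2), (deriv_eq _ _ _ Hfp1),
    (deriv_eq _ _ _ Hfp2), (deriv_eq _ _ _ Hgu1), (deriv_eq _ _ _ Hgu2),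
    (deriv_eq _ _ _ Hgp1), (deriv_eq _ _ _ Hgp2).
Qed.

Ltac solve_gradient :=
  unfold has_gradient, fa, fb, y3, x3, beta;
  repeat split; apply is_derive_Reals; auto_derive; try (repeat split; lra); field; lra.

Section Gradients.

Variables u1 u2 p1 p2 : R.
Hypothesis Hu : u1 <> u2.

Let d := u1 - u2.
Let s := (p1 ^ 2 - p2 ^ 2) / d ^ 2.
Let bt := beta u1 u2 p1 p2.

Lemma fa_gradient :
  has_gradient fa u1 u2 p1 p2 (- s - 2 * u1 - u2) (s - u1 - 2 * u2) (2 * p1 / d) (- 2 * p2 / d).
Proof. unfold s, d; solve_gradient. Qed.

Lemma fb_gradient :
  has_gradient fb u1 u2 p1 p2 (u2 * s + 2 * u1 * u2 + u2 ^ 2) (- u1 * s + u1 ^ 2 + 2 * u1 * u2)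
    (- 2 * u2 * p1 / d) (2 * u1 * p2 / d).
Proof. unfold s, d; solve_gradient. Qed.

Lemma x3_gradient :
  has_gradient x3 u1 u2 p1 p2 (- 2 * bt ^ 2 / d - 1) (2 * bt ^ 2 / d - 1) (2 * bt / d) (- 2 * bt / d).
Proof. unfold bt, d; solve_gradient. Qed.

(* Chain rule through y3 = p1 + bt * (x3 - u1), with the partials of bt being
   (-bt/d, bt/d, 1/d, -1/d). *)
Lemma y3_gradient :
  has_gradient y3 u1 u2 p1 p2
    (- bt / d * (x3 u1 u2 p1 p2 - u1) + bt * (- 2 * bt ^ 2 / d - 2))
    (bt / d * (x3 u1 u2 p1 p2 - u1) + bt * (2 * bt ^ 2 / d - 1))
    (1 + (x3 u1 u2 p1 p2 - u1) / d + 2 * bt ^ 2 / d)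
    (- (x3 u1 u2 p1 p2 - u1) / d - 2 * bt ^ 2 / d).
Proof. unfold bt, d; solve_gradient. Qed.

End Gradients.

Theorem proposition2 : forall u1 u2 p1 p2 : R, u1 <> u2 ->
  PB fa fb u1 u2 p1 p2 = 0 /\
  PB fa x3 u1 u2 p1 p2 = 0 /\
  PB fa y3 u1 u2 p1 p2 = 0 /\
  PB fb x3 u1 u2 p1 p2 = 2 * y3 u1 u2 p1 p2 /\
  PB fb y3 u1 u2 p1 p2 = 3 * (x3 u1 u2 p1 p2) ^ 2 + fa u1 u2 p1 p2 /\
  PB x3 y3 u1 u2 p1 p2 = -1 /\
  (y3 u1 u2 p1 p2) ^ 2 = (x3 u1 u2 p1 p2) ^ 3 + fa u1 u2 p1 p2 * x3 u1 u2 p1 p2 + fb u1 u2 p1 p2.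
Proof.
  intros u1 u2 p1 p2 Hu.
  pose proof (fa_gradient u1 u2 p1 p2 Hu) as Ga.
  pose proof (fb_gradient u1 u2 p1 p2 Hu) as Gb.
  pose proof (x3_gradient u1 u2 p1 p2 Hu) as Gx.
  pose proof (y3_gradient u1 u2 p1 p2 Hu) as Gy.
  rewrite (PB_gradient Ga Gb), (PB_gradient Ga Gx), (PB_gradient Ga Gy),
    (PB_gradient Gb Gx), (PB_gradient Gb Gy), (PB_gradient Gx Gy).
  assert (Hd : u1 - u2 <> 0) by lra.
  unfold fa, fb, y3, x3, beta.
  repeat split; field; lra.
Qed.
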